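(* Let $\mathbb{X}$ be a finite subset of the projective space $\mathbb{P}^{s-1}$ over a field $K$, and let $I(\mathbb{X})\subset S=K[t_1,\ldots,t_s]$ be its vanishing ideal. If $0\neq f\in S$ is homogeneous, then $$|V_{\mathbb{X}}(f)|=\begin{cases}\deg(S/(I(\mathbb{X}),f)) & \text{if } (I(\mathbb{X})\colon f)\neq I(\mathbb{X}),\\ 0 & \text{if } (I(\mathbb{X})\colon f)=I(\mathbb{X}).\end{cases}$$
   Context: $I(\mathbb{X})$ is the ideal generated by all homogeneous polynomials vanishing at every point of $\mathbb{X}$. $V_{\mathbb{X}}(f)$ is the set of points $[\alpha]\in\mathbb{X}$ with $f(\alpha)=0$. $(I\colon f)=\{h\in S: hf\in I\}$. For a graded ideal $J$ with Hilbert function $H_J(d)=\dim_K(S_d/J_d)$ and $k=\dim(S/J)$, $\deg(S/J)=(k-1)!\lim_{d\to\infty}H_J(d)/d^{k-1}$ if $k\geq 1$ and $\dim_K(S/J)$ if $k=0$. *)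

From mathcomp Require Import all_boot all_algebra.
From mathcomp Require Import mpoly.
From Stdlib Require Import ClassicalEpsilon.
Set Implicit Arguments. Unset Strict Implicit. Unset Printing Implicit Defensive.
Import GRing.Theory Num.Theory.
Local Open Scope ring_scope.

Section Defs.
Variables (K : fieldType) (n : nat).
Local Notation S := {mpoly K[n]}.

Definition homogeneous (f : S) : Prop := exists d : nat, f \is d.-homog.

Definition ideal_gen (P : S -> Prop) : S -> Prop :=
  fun g => exists r : seq (S * S),
    (forall p, p \in r -> P p.2) /\ g = \sum_(p <- r) p.1 * p.2.

(* I(X): ideal generated by all homogeneous polynomials vanishing at every
   point of X (X given by representatives alpha in K^n) *)
Definition vanishing_ideal (X : seq {ffun 'I_n -> K}) : S -> Prop :=
  ideal_gen (fun g => homogeneous g /\ forall a, a \in X -> g.@[a] = 0).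

Definition ideal_add (I : S -> Prop) (f : S) : S -> Prop :=
  ideal_gen (fun g => I g \/ g = f).

Definition colon (I : S -> Prop) (f : S) : S -> Prop := fun h => I (h * f).

Definition proportional (a b : {ffun 'I_n -> K}) : Prop :=
  exists c : K, forall i, b i = c * a i.

(* X is a (finite) set of points of P^{n-1}, given by one representative each *)
Definition proj_points (X : seq {ffun 'I_n -> K}) : Prop :=
  (forall a, a \in X -> a != [ffun => 0]) /\
  (forall a b, a \in X -> b \in X -> proportional a b -> a = b) /\ uniq X.

Definition card_zeros (X : seq {ffun 'I_n -> K}) (f : S) : nat :=
  count (fun a : {ffun 'I_n -> K} => f.@[a] == 0) X.

(* b is a family whose classes form a K-basis of (Q)/J, where Q is the
   K-subspace of S given by the predicate Q *)
Definition quot_basis (Q : S -> Prop) (J : S -> Prop) (b : seq S) : Prop :=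
  (forall p, p \in b -> Q p) /\
  (forall c : 'I_(size b) -> K,
      J (\sum_(i < size b) c i *: b`_i) -> forall i, c i = 0) /\
  (forall g, Q g -> exists c : 'I_(size b) -> K,
      J (g - \sum_(i < size b) c i *: b`_i)).

(* H_J(d) = dim_K (S_d / J_d) *)
Definition hilbert_fun (J : S -> Prop) (d : nat) : nat :=
  epsilon (inhabits 0%N)
    (fun m => exists b, size b = m /\ quot_basis (fun g => g \is d.-homog) J b).

Definition quot_dim_is (J : S -> Prop) (e : nat) : Prop :=
  exists b, size b = e /\ quot_basis (fun _ => True) J b.

Definition is_ideal (P : S -> Prop) : Prop :=
  P 0 /\ (forall a b, P a -> P b -> P (a + b)) /\ (forall r a, P a -> P (r * a)).
Definition is_prime (P : S -> Prop) : Prop :=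
  is_ideal P /\ ~ P 1 /\ (forall a b, P (a * b) -> P a \/ P b).

(* a chain P_0 < P_1 < ... < P_k of primes of S containing J,
   i.e. a chain of primes of S/J of length k *)
Definition has_prime_chain (J : S -> Prop) (k : nat) : Prop :=
  exists Ps : nat -> S -> Prop,
    (forall i, (i <= k)%N -> is_prime (Ps i) /\ forall x, J x -> Ps i x) /\
    (forall i, (i < k)%N ->
       (forall x, Ps i x -> Ps i.+1 x) /\ exists x, Ps i.+1 x /\ ~ Ps i x).

Definition krull_dim_is (J : S -> Prop) (k : nat) : Prop :=
  has_prime_chain J k /\ ~ has_prime_chain J k.+1.

Definition cvg_rat (u : nat -> rat) (l : rat) : Prop :=
  forall eps : rat, 0 < eps -> exists N : nat, forall d, (N <= d)%N -> `|u d - l| < eps.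

(* deg(S/J) = e, with k = dim(S/J):
   k >= 1 : (k-1)! * lim_{d -> oo} H_J(d) / d^(k-1) = e
   k = 0  : dim_K(S/J) = e *)
Definition degree_is (J : S -> Prop) (e : nat) : Prop :=
  exists k : nat, krull_dim_is J k /\
    (if k is k'.+1 then
       cvg_rat (fun d => (k'`!)%:R * (hilbert_fun J d)%:R / (d%:R ^+ k')) e%:R
     else quot_dim_is J e).

End Defs.

(* If f vanishes at some p in X, the homogeneous indicator of p (a product of linear
   forms separating p from the other points, times a power of a variable) lies in
   (I(X) : f) but not in I(X); if f vanishes nowhere on X, then h f in I(X) forces every
   homogeneous component of h to vanish on X.  In the first case, interpolation by forms
   of degree d >= deg f + |X| shows that such a form lies in (I(X), f) iff it vanishes on
   V_X(f), so the indicators of the points of V_X(f) form a basis of S_d / (I(X), f)_d and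
   the Hilbert function is eventually |V_X(f)|.  Finally dim S/(I(X), f) = 1: restriction
   to the line through a zero of f and evaluation at the origin give a chain of two
   primes, while a prime containing I(X) contains all linear forms vanishing at some point
   of X, which makes S modulo it a quotient of K[T], where nonzero primes are maximal. *)

From mathcomp Require Import all_boot all_algebra.
From mathcomp Require Import mpoly.
From Stdlib Require Import Classical ClassicalEpsilon.
Set Implicit Arguments. Unset Strict Implicit. Unset Printing Implicit Defensive.
Import GRing.Theory Num.Theory.
Local Open Scope ring_scope.

Section Ideals.
Variables (K : fieldType) (n : nat).
Local Notation S := {mpoly K[n]}.
Implicit Types (P Q : S -> Prop) (g h : S).

Lemma ideal_gen_ind P Q :
  Q 0 -> (forall g h, Q g -> Q h -> Q (g + h)) -> (forall r g, P g -> Q (r * g)) ->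
  forall g, ideal_gen P g -> Q g.
Proof.
move=> Q0 QD QM g [r [Pr ->]]; elim: r Pr => [|a r IH] Pr; first by rewrite big_nil.
rewrite big_cons; apply: QD; first by apply/QM/Pr; rewrite mem_head.
by apply: IH => p pr; apply: Pr; rewrite inE pr orbT.
Qed.

Lemma ideal_gen_base P g : P g -> ideal_gen P g.
Proof.
by move=> Pg; exists [:: (1, g)]; rewrite big_seq1 mul1r; split=> // p /[!inE] /eqP->.
Qed.

Lemma ideal_gen_ideal P : is_ideal (ideal_gen P).
Proof.
split; first by exists [::]; rewrite big_nil.
split=> [a b [r1 [P1 ->]] [r2 [P2 ->]] | c a [r [Pr ->]]].
  exists (r1 ++ r2); rewrite big_cat; split=> // p.
  by rewrite mem_cat => /orP[/P1|/P2].
exists [seq (c * p.1, p.2) | p <- r]; split.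
  move=> q /mapP[p pr ->]; exact: (Pr p pr).
by rewrite big_map mulr_sumr; apply: eq_bigr => p _; rewrite mulrA.
Qed.

Section IdealTheory.
Variable Q : S -> Prop.
Hypothesis idQ : is_ideal Q.

Lemma ideal0 : Q 0.
Proof. by case: idQ. Qed.
Lemma idealD g h : Q g -> Q h -> Q (g + h).
Proof. by case: idQ => _ [QD _]; apply: QD. Qed.
Lemma idealMl r g : Q g -> Q (r * g).
Proof. by case: idQ => _ [_ QM]; apply: QM. Qed.
Lemma idealN g : Q g -> Q (- g).
Proof. by rewrite -mulN1r; apply: idealMl. Qed.
Lemma idealB g h : Q g -> Q h -> Q (g - h).
Proof. by move=> ? ?; apply/idealD/idealN. Qed.

Lemma ideal_sum (I : Type) (r : seq I) (F : I -> S) :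
  (forall i, Q (F i)) -> Q (\sum_(i <- r) F i).
Proof. by move=> QF; apply: (big_ind Q) => //; [apply: ideal0 | apply: idealD]. Qed.

Lemma ideal_gen_min P : (forall g, P g -> Q g) -> forall g, ideal_gen P g -> Q g.
Proof.
move=> PQ; apply: ideal_gen_ind => [|g h|r g /PQ].
- exact: ideal0.
- exact: idealD.
exact: idealMl.
Qed.

Lemma ideal_congr g h : Q (g - h) -> Q g <-> Q h.
Proof.
move=> Qgh; split=> [Qg | Qh]; first by rewrite -[h](subKr g); apply: idealB.
by rewrite -[g](subrK h); apply: idealD.
Qed.

End IdealTheory.

Lemma kernel_prime (D : idomainType) (phi : {rmorphism S -> D}) :
  is_prime (fun g => phi g = 0).
Proof.
split; [split; [exact: rmorph0 | split] | split].
- by move=> a b Ha Hb; rewrite rmorphD Ha Hb addr0.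
- by move=> r a Ha; rewrite rmorphM Ha mulr0.
- by rewrite rmorph1 => /eqP; rewrite oner_eq0.
by move=> a b; rewrite rmorphM => /eqP; rewrite mulf_eq0 => /orP[] /eqP; [left|right].
Qed.

Lemma has_prime_chain_sub (J J' : S -> Prop) k :
  (forall g, J g -> J' g) -> has_prime_chain J' k -> has_prime_chain J k.
Proof.
move=> JJ' [Ps [HP Hsub]]; exists Ps; split=> // i ik.
by have [pr J'P] := HP i ik; split=> // g /JJ'; apply: J'P.
Qed.

End Ideals.

Lemma dhomogXU {R : nzRingType} {n} (i : 'I_n) : ('X_i : {mpoly R[n]}) \is 1.-homog.
Proof. by rewrite dhomogX; apply/eqP; exact: mdeg1. Qed.

Section Points.
Variables (K : fieldType) (n : nat).
Local Notation S := {mpoly K[n]}.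
Local Notation point := {ffun 'I_n -> K}.
Implicit Types (g h : S) (p q : point).

Lemma pihomogM_homog e k r g : g \is e.-homog ->
  pihomog mdeg k (r * g) = if (e <= k)%N then pihomog mdeg (k - e) r * g else 0.
Proof.
move=> hg; elim/mpolyind: r => [|c m p _ _ IH].
  by rewrite mul0r linear0; case: ifP => //; rewrite linear0 mul0r.
rewrite mulrDl pihomogD IH -scalerAl linearZ /=.
have hm : 'X_[m] * g \is (mdeg m + e).-homog by apply: dhomogM => //; rewrite dhomogX.
case: (eqVneq (mdeg m + e)%N k) => [<- | Hk].
  by rewrite pihomog_dE // leq_addl linearD linearZ /= pihomogX addnK eqxx mulrDl scalerAl.
rewrite (pihomog_ne0 Hk hm) scaler0 add0r; case: leqP => // lek.
rewrite linearD linearZ /= pihomogX.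
have -> : (mdeg m == k - e)%N = false.
  by apply/negbTE; apply: contra Hk => /eqP ->; rewrite subnK.
by rewrite scaler0 add0r.
Qed.

Lemma point_coord_neq0 p : p != [ffun => 0] -> exists i, p i != 0.
Proof.
move=> p0; have /existsP[i ?] : [exists i, p i != 0]; last by exists i.
apply: contraNT p0 => /existsPn p0; apply/eqP/ffunP => i.
by rewrite ffunE; apply/eqP/negPn/p0.
Qed.

Lemma separating_linear_form p q : p != [ffun => 0] -> ~ proportional p q ->
  exists L : S, [/\ L \is 1.-homog, L.@[q] = 0 & L.@[p] != 0].
Proof.
move=> /point_coord_neq0 [i pi] npq.
have [j qpj] : exists j, q j * p i != q i * p j.
  apply: NNPP => H; apply: npq; exists (q i / p i) => j.
  have /eqP E : q j * p i == q i * p j by apply: NNPP => H'; apply: H; exists j; apply/negP.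
  by rewrite mulrAC -E mulfK.
exists (q i *: 'X_j - q j *: 'X_i); split; first by rewrite rpredB ?rpredZ ?dhomogXU.
  by rewrite mevalB !mevalZ !mevalXU mulrC subrr.
by rewrite mevalB !mevalZ !mevalXU subr_eq0 eq_sym.
Qed.

Lemma prod_linear_forms (R : S -> Prop) (Z : seq point) :
  R 1 -> (forall L G, R L -> R G -> R (L * G)) ->
  (forall q, q \in Z -> exists L : S, [/\ L \is 1.-homog, L.@[q] = 0 & R L]) ->
  exists G : S, [/\ G \is (size Z).-homog, forall q, q \in Z -> G.@[q] = 0 & R G].
Proof.
move=> R1 RM; elim: Z => [|z Z IH] HL; first by exists 1; rewrite dhomog1.
have [|G [hG GZ RG]] := IH; first by move=> q qZ; apply: HL; rewrite inE qZ orbT.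
have [L [hL Lz RL]] := HL z (mem_head _ _).
exists (L * G); split; [by rewrite /= -add1n; apply: dhomogM | | exact: RM].
by move=> q /[!inE] /orP[/eqP-> | /GZ Gq]; rewrite mevalM ?Lz ?Gq ?mul0r ?mulr0.
Qed.

Variable X : seq point.
Local Notation I := (vanishing_ideal X).

Lemma vanishing_ideal_ideal : is_ideal I.
Proof. exact: ideal_gen_ideal. Qed.

Lemma vanishing_ideal_meval g a : I g -> a \in X -> g.@[a] = 0.
Proof.
move=> Ig aX; apply: (ideal_gen_min (kernel_prime (meval a)).1 _ Ig).
by move=> h [_ /(_ a aX)].
Qed.

Lemma vanishing_ideal_homog d g :
  g \is d.-homog -> (forall a, a \in X -> g.@[a] = 0) -> I g.
Proof. by move=> hg g0; apply: ideal_gen_base; split=> //; exists d. Qed.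

Lemma vanishing_idealE g :
  I g <-> forall k a, a \in X -> (pihomog mdeg k g).@[a] = 0.
Proof.
split=> [Ig k a aX | Ig].
  move: g Ig; apply: ideal_gen_ind => [|g h Hg Hh|r g [[e he] g0]].
  - by rewrite linear0 meval0.
  - by rewrite linearD mevalD Hg Hh addr0.
  by rewrite (pihomogM_homog _ _ he); case: ifP; rewrite ?meval0 // mevalM g0 ?mulr0.
rewrite (pihomog_partitionE (k := msize g) (mf := mdeg) (leqnn _)).
apply: (ideal_sum vanishing_ideal_ideal).
by move=> k; apply: (@vanishing_ideal_homog k); [exact: pihomogP | exact: Ig].
Qed.

Hypothesis PX : proj_points X.

Lemma homog_indicator p m : p \in X -> (size X <= m)%N ->
  exists g : S, g \is m.-homog /\ forall a, a \in X -> g.@[a] = (a == p)%:R.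
Proof.
move: PX => [X0 [Xprop _]] pX Xm; set Z := [seq q <- X | q != p].
have [|||G [hG GZ Gp]] := @prod_linear_forms (fun G => G.@[p] != 0) Z.
- by rewrite meval1 oner_eq0.
- by move=> L G Lp Gp; rewrite mevalM mulf_neq0.
- move=> q /[!mem_filter] /andP[qp qX]; apply: separating_linear_form; first exact: X0.
  by move=> /(Xprop _ _ pX qX) pq; rewrite pq eqxx in qp.
have [i pi] := point_coord_neq0 (X0 p pX).
have Zm : (size Z <= m)%N by rewrite size_filter (leq_trans (count_size _ _) Xm).
exists ((G.@[p] * p i ^+ (m - size Z))^-1 *: (G * 'X_i ^+ (m - size Z))); split.
  have := dhomogMn (m - size Z) (@dhomogXU K _ i); rewrite mul1n => hXi.
  by apply/rpredZ; have := dhomogM hG hXi; rewrite subnKC.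
move=> a aX; rewrite mevalZ mevalM rmorphXn /= mevalXU; case: (eqVneq a p) => [-> | ap].
  by rewrite mulVf // mulf_neq0 ?expf_neq0.
by rewrite (GZ a) ?mul0r ?mulr0 // /Z mem_filter ap aX.
Qed.

Lemma homog_interpolation m (v : point -> K) : (size X <= m)%N ->
  exists h : S, h \is m.-homog /\ forall a, a \in X -> h.@[a] = v a.
Proof.
move=> Xm; have [_ [_ uX]] := PX.
suff /(_ X uX (fun _ => id)) [h [hh hv]] : forall Z, uniq Z -> {subset Z <= X} ->
    exists h : S, h \is m.-homog /\
      forall a, a \in X -> h.@[a] = if a \in Z then v a else 0.
  by exists h; split=> // a aX; rewrite hv aX.
elim=> [|z Z IH] uZ ZX; first by exists 0; split=> [|a _]; rewrite ?rpred0 ?meval0.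
have [||h [hh hv]] := IH; [by case/andP: uZ | by move=> a aZ; apply/ZX/mem_behead |].
have [g [hg gv]] := homog_indicator (ZX z (mem_head _ _)) Xm.
exists (h + v z *: g); split=> [|a aX]; first by rewrite rpredD ?rpredZ.
rewrite mevalD mevalZ hv // gv // inE; case: (eqVneq a z) => [-> | az] /=.
  by case/andP: uZ => /negbTE-> _; rewrite mulr1 add0r.
by rewrite mulr0 addr0.
Qed.

Lemma homog_indicators m (Z : seq point) : (size X <= m)%N -> {subset Z <= X} ->
  exists b : seq S, [/\ size b = size Z, forall g, g \in b -> g \is m.-homog &
    forall k a, (k < size Z)%N -> a \in X -> (b`_k).@[a] = (a == Z`_k)%:R].
Proof.
move=> Xm; elim: Z => [|z Z IH] ZX; first by exists [::].
have [|b [sb hb bv]] := IH; first by move=> a aZ; apply/ZX/mem_behead.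
have [g [hg gv]] := homog_indicator (ZX z (mem_head _ _)) Xm.
exists (g :: b); split=> [|h|[|k] a] /=; first by rewrite sb.
  by rewrite inE => /orP[/eqP-> | /hb].
by move=> _; apply: gv.
by rewrite ltnS; apply: bv.
Qed.

End Points.

Section ZeroSet.
Variables (K : fieldType) (n : nat).
Local Notation S := {mpoly K[n]}.
Local Notation point := {ffun 'I_n -> K}.
Variables (X : seq point) (f : S) (e : nat).
Hypotheses (PX : proj_points X) (hf : f \is e.-homog).
Local Notation I := (vanishing_ideal X).
Local Notation J := (ideal_add I f).
Local Notation V := [seq a : point <- X | f.@[a] == 0].

Lemma colon_vanishing_ideal_neq p : p \in X -> f.@[p] = 0 ->
  ~ (forall h, colon I f h <-> I h).
Proof.
move=> pX fp colonI.
have [g [hg gv]] := homog_indicator PX pX (leqnn _).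
suff /vanishing_ideal_meval/(_ pX)/eqP : I g by rewrite gv // eqxx oner_eq0.
apply/colonI/(vanishing_ideal_homog (dhomogM hg hf)) => a aX.
by rewrite mevalM gv //; case: (eqVneq a p) => [-> | _]; rewrite ?fp ?mulr0 ?mul0r.
Qed.

Lemma colon_vanishing_ideal_eq : (forall p, p \in X -> f.@[p] != 0) ->
  forall h, colon I f h <-> I h.
Proof.
move=> f0 h; split=> [/vanishing_idealE hfI | Ih]; last first.
  by rewrite /colon mulrC; apply: idealMl (vanishing_ideal_ideal X) _ _ Ih.
apply/vanishing_idealE => k a aX; have /eqP := hfI (k + e)%N a aX.
rewrite (pihomogM_homog _ _ hf) leq_addl addnK mevalM mulf_eq0 (negbTE (f0 a aX)) orbF.
by move/eqP.
Qed.

Lemma ideal_add_homogP d g : (e + size X <= d)%N -> g \is d.-homog ->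
  J g <-> forall a, a \in V -> g.@[a] = 0.
Proof.
move=> Xd hg; split=> [Jg a | g0].
  rewrite mem_filter => /andP[/eqP fa aX]; move: g Jg {hg}.
  apply: (ideal_gen_min (kernel_prime (meval a)).1) => g [Ig | ->] //=.
  exact: vanishing_ideal_meval Ig aX.
have ed : (e <= d)%N := leq_trans (leq_addr _ _) Xd.
have Xde : (size X <= d - e)%N by rewrite leq_subRL.
(* As x / 0 = 0, h * f also agrees with g at the zeros of f, where g vanishes. *)
have [h [hh hv]] := homog_interpolation PX (fun a => g.@[a] / f.@[a]) Xde.
rewrite -[g](subrK (h * f)); apply: (idealD (ideal_gen_ideal _)).
  apply/ideal_gen_base; left; apply: (@vanishing_ideal_homog _ _ _ d).
    by rewrite rpredB //; have := dhomogM hh hf; rewrite subnK.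
  move=> a aX; rewrite mevalB mevalM hv //; have [fa | fa] := eqVneq f.@[a] 0.
    by rewrite fa mulr0 subr0; apply: g0; rewrite mem_filter fa eqxx.
  by rewrite divfK // subrr.
by apply: (idealMl (ideal_gen_ideal _)); apply: ideal_gen_base; right.
Qed.

Lemma uniq_zeros : uniq V.
Proof. by apply: filter_uniq; case: PX => _ []. Qed.

Lemma zeros_subset : {subset V <= X}.
Proof. by move=> a; rewrite mem_filter => /andP[]. Qed.

Section Degree.
Variable d : nat.
Hypothesis Xd : (e + size X <= d)%N.
Let sizeX_le_d : (size X <= d)%N := leq_trans (leq_addl _ _) Xd.

Lemma quot_basis_indicators :
  exists b, size b = size V /\ quot_basis (fun g => g \is d.-homog) J b.
Proof.
have [b [sb hb bv]] := homog_indicators PX sizeX_le_d zeros_subset.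
have hcomb (c : 'I_(size b) -> K) : \sum_(i < size b) c i *: b`_i \is d.-homog.
  by apply: rpred_sum => i _; apply/rpredZ/hb/mem_nth.
have evalV (c : 'I_(size b) -> K) (j : 'I_(size b)) :
    (\sum_(i < size b) c i *: b`_i).@[V`_j] = c j.
  have jV : (j < size V)%N by rewrite -sb.
  rewrite raddf_sum (bigD1 j) //= big1 => [|i ij];
    rewrite mevalZ bv -?sb ?zeros_subset ?mem_nth //.
    by rewrite eqxx mulr1 addr0.
  by rewrite nth_uniq ?uniq_zeros -?sb // (inj_eq val_inj) eq_sym (negbTE ij) mulr0.
exists b; split=> //; split; [exact: hb | split].
  move=> c /(ideal_add_homogP Xd (hcomb c)) c0 i.
  by rewrite -evalV c0 // mem_nth // -sb.
move=> g hg; exists (fun i => g.@[V`_i]); apply/(ideal_add_homogP Xd).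
  by rewrite rpredB ?hcomb.
move=> a aV; have jb : (index a V < size b)%N by rewrite sb index_mem.
by rewrite -(nth_index 0 aV) -[index a V]/(nat_of_ord (Ordinal jb)) mevalB evalV subrr.
Qed.

Lemma quot_basis_size b' :
  quot_basis (fun g => g \is d.-homog) J b' -> size b' = size V.
Proof.
move=> [hb' [indep span]].
(* The evaluation matrix of b' at V is injective since b' is independent modulo J, and
   surjective since b' spans the indicators of the points of V. *)
pose M : 'M[K]_(size b', size V) := \matrix_(i, j) (b'`_i).@[V`_j].
have evalM (c : 'I_(size b') -> K) (j : 'I_(size V)) :
    (\sum_(i < size b') c i *: b'`_i).@[V`_j] = (\row_i c i *m M) 0 j.
  by rewrite raddf_sum !mxE /=; apply: eq_bigr => i _; rewrite mevalZ !mxE.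
have hcomb (c : 'I_(size b') -> K) : \sum_(i < size b') c i *: b'`_i \is d.-homog.
  by apply: rpred_sum => i _; apply/rpredZ/hb'/mem_nth.
have M_free : row_free M.
  apply/inj_row_free => v vM0; apply/rowP => i; rewrite mxE.
  apply: (indep (fun i => v 0 i)); apply/(ideal_add_homogP Xd (hcomb _)) => a aV.
  have jV : (index a V < size V)%N by rewrite index_mem.
  rewrite -(nth_index 0 aV) -[index a V]/(nat_of_ord (Ordinal jV)) evalM.
  by rewrite (_ : \row_i v 0 i = v) ?vM0 ?mxE //; apply/rowP => k; rewrite mxE.
have [b [sb hb bv]] := homog_indicators PX sizeX_le_d zeros_subset.
have M_full : row_full M.
  rewrite -sub1mx; apply/row_subP => j; apply/submxP.
  have jb : (j < size b)%N by rewrite sb.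
  have [c /(ideal_add_homogP Xd)] := span _ (hb _ (mem_nth 0 jb)).
  move=> /(_ _) bc; exists (\row_i c i); apply/rowP => k.
  have /eqP := bc (rpredB (hb _ (mem_nth 0 jb)) (hcomb c)) _ (mem_nth 0 (ltn_ord k)).
  rewrite mevalB evalM subr_eq0 => /eqP <-; rewrite !mxE bv ?zeros_subset ?mem_nth //.
  by rewrite nth_uniq ?uniq_zeros // eq_sym.
by move: M_free M_full; rewrite /row_free /row_full => /eqP E1 /eqP E2; rewrite -E1 E2.
Qed.

Lemma hilbert_fun_ideal_add : hilbert_fun J d = size V.
Proof.
have [b [sb bJ]] := quot_basis_indicators; rewrite /hilbert_fun.
have [b' [<- b'J]] := epsilon_spec (inhabits 0%N)
  (fun m => exists b, size b = m /\ quot_basis (fun g => g \is d.-homog) J b)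
  (ex_intro _ _ (ex_intro _ b (conj sb bJ))).
exact: quot_basis_size.
Qed.

End Degree.
End ZeroSet.

Section Krull.
Variables (K : fieldType) (n : nat).
Local Notation S := {mpoly K[n]}.
Local Notation point := {ffun 'I_n -> K}.
Implicit Types (g h : S) (p q : point).

Definition line_restriction p : {rmorphism S -> {poly K}} :=
  mmap (@polyC K) (fun i => (p i)%:P * 'X).

Lemma line_restriction_homog p d g : g \is d.-homog ->
  line_restriction p g = (g.@[p])%:P * 'X ^+ d.
Proof.
move=> /dhomogP hg; rewrite /= /mmap (mevalE p g) rmorph_sum mulr_suml.
apply: eq_big_seq => m mm; rewrite /mmap1 rmorphM -mulrA /=; congr (_ * _).
under eq_bigr do rewrite exprMn.
rewrite big_split /= prodrXr rmorph_prod -(hg m mm) /= mdegE; congr (_ * _).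
by apply: eq_bigr => i _; rewrite rmorphXn.
Qed.

Lemma line_restrictionXU p i : line_restriction p 'X_i = (p i)%:P * 'X.
Proof. by rewrite (line_restriction_homog _ (dhomogXU i)) mevalXU expr1. Qed.

Lemma has_prime_chain1 X f e p : f \is e.-homog -> p \in X -> f.@[p] = 0 ->
  p != [ffun => 0] -> has_prime_chain (ideal_add (vanishing_ideal X) f) 1.
Proof.
move=> hf pX fp p0; set phi := line_restriction p.
pose phi0 : {rmorphism S -> K} := horner_eval 0 \o phi.
have phi_homog d g : g \is d.-homog -> g.@[p] = 0 -> phi g = 0.
  by move=> hg gp; rewrite /phi (line_restriction_homog _ hg) gp mul0r.
have Jphi : forall g, ideal_add (vanishing_ideal X) f g -> phi g = 0.
  apply: (ideal_gen_min (kernel_prime phi).1) => g [Ig | ->]; last exact: phi_homog hf fp.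
  apply: (ideal_gen_min (kernel_prime phi).1 _ Ig) => h [[d hd] /(_ p pX)].
  exact: phi_homog hd.
have [i pi] := point_coord_neq0 p0.
exists (fun k => if k == 0%N then (fun g => phi g = 0) else (fun g => phi0 g = 0)).
split=> [k _ | k].
  case: (k == 0%N); (split; first exact: kernel_prime) => g /Jphi //= ->.
  by rewrite horner_evalE horner0.
rewrite ltnS leqn0 => /eqP-> /=; split=> [g /= -> | ].
  by rewrite horner_evalE horner0.
exists 'X_i; rewrite /= line_restrictionXU horner_evalE hornerCM hornerX mulr0; split=> //.
by apply/eqP; rewrite mulf_neq0 ?polyC_eq0 ?polyX_eq0.
Qed.

Lemma prime_over_vanishing_ideal X (P : S -> Prop) : is_prime P ->
  (forall g, vanishing_ideal X g -> P g) ->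
  exists2 q, q \in X & forall L : S, L \is 1.-homog -> L.@[q] = 0 -> P L.
Proof.
move=> [idP [P1 Pprime]] IP; apply: NNPP => noq.
have [|||G [hG GX PG]] := @prod_linear_forms _ _ (fun g => ~ P g) X.
- exact: P1.
- by move=> L G PL PG /Pprime[].
- move=> q qX; apply: NNPP => noL; apply: noq; exists q => // L hL Lq.
  by apply: NNPP => PL; apply: noL; exists L.
by apply/PG/IP/(vanishing_ideal_homog hG).
Qed.

Definition line_lift q i : {rmorphism {poly K} -> S} :=
  horner_eval ((q i)^-1 *: 'X_i) \o map_poly (@mpolyC n K).

Lemma line_lift_restriction (P : S -> Prop) q i : is_ideal P -> q i != 0 ->
  (forall L : S, L \is 1.-homog -> L.@[q] = 0 -> P L) ->
  forall g, P (g - line_lift q i (line_restriction q g)).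
Proof.
move=> idP qi Lq; pose T g := P (g - line_lift q i (line_restriction q g)).
have TD g h : T g -> T h -> T (g + h).
  by rewrite /T !rmorphD opprD addrACA; apply: idealD.
have TM g h : T g -> T h -> T (g * h).
  move=> Tg Th; rewrite /T !rmorphM.
  set g' := line_lift _ _ _; set h' := line_lift _ _ _.
  rewrite (_ : g * h - g' * h' = h * (g - g') + g' * (h - h')); last first.
    by rewrite [h * _]mulrC mulrBl mulrBr addrA subrK.
  by apply: (idealD idP); apply: (idealMl idP).
have TC c : T c%:MP.
  rewrite /T /line_restriction /= mmapC horner_evalE map_polyC hornerC subrr.
  exact: ideal0 idP.
have TX j : T 'X_j.
  rewrite /T line_restrictionXU rmorphM /line_lift /= !horner_evalE map_polyC map_polyX.
  rewrite hornerC hornerX; apply: Lq.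
    by rewrite /= mul_mpolyC rpredB ?rpredZ ?dhomogXU.
  by rewrite /= mevalB mevalM mevalC mevalZ !mevalXU mulVf // mulr1 subrr.
elim/mpolyind=> [|c m p _ _ Tp]; first by rewrite /T !rmorph0 subrr; exact: ideal0 idP.
apply: (TD) => //; rewrite -mul_mpolyC; apply: (TM) => //.
rewrite mpolyXE_id; apply: (big_ind T) => [|g h|j _]; [exact: (TC 1) | exact: TM |].
by elim: (m j) => [|k IHk]; [exact: (TC 1) | rewrite exprS; apply: TM].
Qed.

End Krull.

Lemma poly_prime_maximal (F : fieldType) (Q1 Q2 : {poly F} -> Prop) :
  (forall r a, Q1 a -> Q1 (r * a)) -> (forall a b, Q1 (a * b) -> Q1 a \/ Q1 b) ->
  (forall a, Q1 a -> Q2 a) -> (forall a b, Q2 a -> Q2 b -> Q2 (a + b)) ->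
  (forall r a, Q2 a -> Q2 (r * a)) -> ~ Q2 1 ->
  forall w, Q1 w -> w != 0 -> forall b, Q2 b -> Q1 b.
Proof.
move=> Q1M Q1prime Q12 Q2D Q2M Q2_1 w Q1w w0 b Q2b; apply: NNPP => Q1b.
have b0 : b != 0 by apply/eqP => b0; apply: Q1b; rewrite b0 -(mul0r w); apply: Q1M.
suff noQ1 : forall k (w : {poly F}), (size w <= k)%N -> Q1 w -> w != 0 -> False.
  exact: noQ1 _ w (leqnn _) Q1w w0.
elim=> [|k IH] {}w sw {}Q1w {}w0.
  by move: sw; rewrite leqn0 size_poly_eq0 (negbTE w0).
have [/Bezout_eq1_coprimepP [[u v] /= uvE] | ] := boolP (coprimep w b).
  by apply: Q2_1; rewrite -uvE; apply/Q2D/Q2M => //; apply/Q12/Q1M.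
case/(Bezout_coprimepPn w0 b0) => [[u v] /= /and3P[_ v0 vw] uvE].
have /Q1prime[Q1v | //] : Q1 (v * b) by rewrite -uvE; apply: Q1M.
by apply: (IH v) => //; [rewrite -ltnS (leq_trans vw) | rewrite -size_poly_gt0].
Qed.

Lemma vanishing_ideal_no_prime_chain2 (K : fieldType) n (X : seq {ffun 'I_n -> K}) :
  (forall a, a \in X -> a != [ffun => 0]) -> ~ has_prime_chain (vanishing_ideal X) 2.
Proof.
(* P_0 contains the linear forms vanishing at some q in X, so modulo P_0 every polynomial
   is the lift of its restriction to the line through q, and P_0 < P_1 < P_2 would give a
   nonzero prime of K[T] that is not maximal. *)
move=> X0 [Ps [Pprime Pchain]].
have [pr0 IP0] := Pprime 0%N isT; have [id0 _] := pr0.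
have [[id1 [_ prime1]] _] := Pprime 1%N isT; have [[id2 [P2_1 _]] _] := Pprime 2%N isT.
have [sub01 [x1 [P1x1 nP0x1]]] := Pchain 0%N isT.
have [sub12 [x2 [P2x2 nP1x2]]] := Pchain 1%N isT.
have [q qX Lq] := prime_over_vanishing_ideal pr0 IP0.
have [i qi] := point_coord_neq0 (X0 q qX).
set psi := line_lift q i; set phi := line_restriction q.
have mod0 := line_lift_restriction id0 qi Lq.
have phi_x1 : phi x1 != 0.
  apply: contra_notN nP0x1 => /eqP phi0.
  by have := mod0 x1; rewrite /phi phi0 rmorph0 subr0.
apply: nP1x2; apply/(ideal_congr id1 (sub01 _ (mod0 x2))).
apply: (@poly_prime_maximal _ (fun u => Ps 1%N (psi u)) (fun u => Ps 2%N (psi u))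
  _ _ _ _ _ _ (phi x1) _ phi_x1).
- by move=> r u; rewrite rmorphM; apply: idealMl.
- by move=> u v; rewrite rmorphM; apply: prime1.
- by move=> u /sub12.
- by move=> u v; rewrite rmorphD; apply: idealD.
- by move=> r u; rewrite rmorphM; apply: idealMl.
- by rewrite rmorph1.
- exact/(ideal_congr id1 (sub01 _ (mod0 x1))).
- by apply/(ideal_congr id2 (sub12 _ (sub01 _ (mod0 x2)))).
Qed.

Lemma cvg_rat_eventually (u : nat -> rat) l N :
  (forall d, (N <= d)%N -> u d = l) -> cvg_rat u l.
Proof. by move=> ul eps eps0; exists N => d /ul->; rewrite subrr normr0. Qed.

Theorem lemma3p2 (K : fieldType) (s : nat) (X : seq {ffun 'I_s -> K})
    (f : {mpoly K[s]}) :
  proj_points X -> f != 0 -> homogeneous f ->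
  ( ~ (forall h, colon (vanishing_ideal X) f h <-> vanishing_ideal X h) ->
      degree_is (ideal_add (vanishing_ideal X) f) (card_zeros X f) ) /\
  ( (forall h, colon (vanishing_ideal X) f h <-> vanishing_ideal X h) ->
      card_zeros X f = 0%N ).
Proof.
move=> PX _ [e hf]; have X0 := PX.1; split=> colonI.
  have [p pX fp] : exists2 p, p \in X & f.@[p] = 0.
    apply: NNPP => nozero; apply: colonI; apply: (colon_vanishing_ideal_eq hf) => p pX.
    by apply/eqP => fp; apply: nozero; exists p.
  exists 1%N; split; first split.
  - exact: has_prime_chain1 hf pX fp (X0 p pX).
  - move=> chain; apply: (vanishing_ideal_no_prime_chain2 X0).
    by apply: has_prime_chain_sub chain => g Ig; apply: ideal_gen_base; left.
  apply: (@cvg_rat_eventually _ _ (e + size X)) => d Xd.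
  by rewrite (hilbert_fun_ideal_add PX hf Xd) /card_zeros -size_filter expr0 divr1 fact0 mul1r.
apply/eqP; rewrite -leqn0 leqNgt -has_count; apply/hasP => -[p pX /eqP fp].
exact: (colon_vanishing_ideal_neq PX hf pX fp colonI).
Qed.
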